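(* Let $(\|\cdot\|,\mathcal{P})$ be a sparsity structure on $\mathcal{E}$, let $B:\mathcal{X}\to\mathcal{E}$ be a linear bijection, and let $A:\mathcal{X}\to\mathbb{R}^n$ be linear. Assume $\bar P=I-P$ for every $P\in\mathcal{P}$. Then $\mathcal{C}_P=\mathcal{D}_P$ for every $P\in\mathcal{P}$, and for every $k\ge0$, $\mu_k(A)=\sigma_k(A)$, where $$\mathcal{C}_P=\bigcup_{x\in\mathcal{X}:\ PBx=Bx}\mathcal{T}(x),\qquad \mathcal{D}_P=\{z\in\mathcal{X}:\ \|\bar P Bz\|\le\|PBz\|\},$$ $$\mu_k(A)=\inf_{\substack{P\in\mathcal{P}_k,\ x\in\mathcal{X}\\ PBx=Bx}}\ \inf_{z\in\mathcal{T}(x),\,z\ne 0}\frac{\|Az\|_2}{\|z\|_2},\qquad \sigma_k(A)=\inf_{\substack{P\in\mathcal{P}_k,\ z\in\mathcal{X},\ z\neq 0\\ \|\bar PBz\|\le\|PBz\|}}\frac{\|Az\|_2}{\|z\|_2}.$$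
   Context: Sparsity structure: let $\mathcal{X},\mathcal{E}$ be finite-dimensional Euclidean spaces and $B:\mathcal{X}\to\mathcal{E}$ a linear map. A sparsity structure on $\mathcal{E}$ is a norm $\|\cdot\|$ on $\mathcal{E}$, with dual norm $\|\cdot\|_*$, together with a family $\mathcal{P}$ of linear maps $\mathcal{E}\to\mathcal{E}$ such that: (i) every $P\in\mathcal{P}$ is a projector, $P^2=P$; (ii) every $P\in\mathcal{P}$ is assigned a weight $\nu(P)\ge 0$ and a linear map $\bar P:\mathcal{E}\to\mathcal{E}$ with $P\bar P=0$; (iii) for every $P\in\mathcal{P}$ and all $f,g\in\mathcal{E}$, $\|P^*f+\bar P^*g\|_*\le\max(\|f\|_*,\|g\|_* )$, where $P^*$ and $\bar P^*$ denote adjoints. For $k\ge 0$, $\mathcal{P}_k=\{P\in\mathcal{P}:\nu(P)\le k\}$. Tangent cone: for $x\in\mathcal{X}$, $\mathcal{T}(x)=\{\lambda z:\ \lambda\ge 0,\ z\in\mathcal{X},\ \|Bx+Bz\|\le\|Bx\|\}$. $\|\cdot\|_2$ is the Euclidean norm. *)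

From Stdlib Require Import Reals ClassicalEpsilon.
From mathcomp Require Import ssreflect ssrfun ssrbool eqtype ssrnat seq fintype bigop.

Set Implicit Arguments.
Unset Strict Implicit.
Unset Printing Implicit Defensive.

Local Open Scope R_scope.

Definition vec (d : nat) := 'I_d -> R.
Definition vzero (d : nat) : vec d := fun _ => 0.
Definition vadd d (x y : vec d) : vec d := fun i => x i + y i.
Definition vscale d (a : R) (x : vec d) : vec d := fun i => a * x i.

Definition ip d (x y : vec d) : R := \big[Rplus/0]_(i < d) (x i * y i).
Definition norm2 d (x : vec d) : R := sqrt (ip x x).

Definition mat (m p : nat) := 'I_m -> 'I_p -> R.
Definition app m p (M : mat m p) (x : vec p) : vec m :=
  fun i => \big[Rplus/0]_(j < p) (M i j * x j).
(* Adjoint w.r.t. the standard inner products = transpose. *)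
Definition adj m p (M : mat m p) : mat p m := fun j i => M i j.
Definition mmul m p q (M : mat m p) (N : mat p q) : mat m q :=
  fun i k => \big[Rplus/0]_(j < p) (M i j * N j k).
Definition idm d : mat d d := fun i j => if i == j then 1 else 0.
Definition mzero m p : mat m p := fun _ _ => 0.
Definition msub m p (M N : mat m p) : mat m p := fun i j => M i j - N i j.

Definition is_norm d (nrm : vec d -> R) : Prop :=
  (forall x, 0 <= nrm x) /\
  (forall x, nrm x = 0 -> x = @vzero d) /\
  (forall a x, nrm (vscale a x) = Rabs a * nrm x) /\
  (forall x y, nrm (vadd x y) <= nrm x + nrm y).

Definition dual_norm d (nrm : vec d -> R) (f : vec d) : R :=
  epsilon (inhabits 0)
    (fun s => is_lub (fun t => exists e, nrm e <= 1 /\ t = ip f e) s).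

Definition sparsity_structure d (nrm : vec d -> R) (fam : mat d d -> Prop)
  (nu : mat d d -> R) (Pbar : mat d d -> mat d d) : Prop :=
  is_norm nrm /\
  forall P, fam P ->
    mmul P P = P /\
    0 <= nu P /\
    mmul P (Pbar P) = @mzero d d /\
    (forall f g, dual_norm nrm (vadd (app (adj P) f) (app (adj (Pbar P)) g))
                 <= Rmax (dual_norm nrm f) (dual_norm nrm g)).

Definition tcone m p (nrm : vec m -> R) (B : mat m p) (x : vec p) (w : vec p) : Prop :=
  exists l z, 0 <= l /\ nrm (vadd (app B x) (app B z)) <= nrm (app B x)
              /\ w = vscale l z.

Definition CP m p (nrm : vec m -> R) (B : mat m p) (P : mat m m) (z : vec p) : Prop :=
  exists x, app P (app B x) = app B x /\ tcone nrm B x z.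

Definition DP m p (nrm : vec m -> R) (B : mat m p) (P Pb : mat m m) (z : vec p) : Prop :=
  nrm (app Pb (app B z)) <= nrm (app P (app B z)).

(* Extended reals and the infimum of a set of reals (inf of empty = +oo). *)
Inductive Rbar := Fin (r : R) | PInf | MInf.
Definition Rbar_le (a b : Rbar) : Prop :=
  match a, b with
  | MInf, _ => True
  | _, PInf => True
  | Fin x, Fin y => x <= y
  | _, _ => False
  end.
Definition is_inf (S : R -> Prop) (m : Rbar) : Prop :=
  (forall s, S s -> Rbar_le m (Fin s)) /\
  (forall l, (forall s, S s -> Rbar_le l (Fin s)) -> Rbar_le l m).
Definition Inf (S : R -> Prop) : Rbar := epsilon (inhabits PInf) (is_inf S).

(* mu_k(A) and sigma_k(A); the nested infimum in mu_k is written as a single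
   infimum over the union of the index sets. *)
Definition mu_k n m p (nrm : vec m -> R) (fam : mat m m -> Prop) (nu : mat m m -> R)
  (B : mat m p) (A : mat n p) (k : R) : Rbar :=
  Inf (fun r => exists P x z, fam P /\ nu P <= k /\ app P (app B x) = app B x /\
        tcone nrm B x z /\ z <> @vzero p /\ r = norm2 (app A z) / norm2 z).

Definition sigma_k n m p (nrm : vec m -> R) (fam : mat m m -> Prop) (nu : mat m m -> R)
  (Pbar : mat m m -> mat m m) (B : mat m p) (A : mat n p) (k : R) : Rbar :=
  Inf (fun r => exists P z, fam P /\ nu P <= k /\ z <> @vzero p /\
        DP nrm B P (Pbar P) z /\ r = norm2 (app A z) / norm2 z).

From Stdlib Require Import Reals Lra Classical ClassicalEpsilon.
From Stdlib Require Import FunctionalExtensionality PropExtensionality.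
From HB Require Import structures.
From mathcomp Require Import ssreflect ssrfun ssrbool eqtype ssrnat seq fintype bigop.

Set Implicit Arguments.
Unset Strict Implicit.
Local Open Scope R_scope.

(* With [Pbar P = I - P], condition (iii) applied to norming functionals of
   [P u] and [(I - P) u] gives [||P u|| + ||(I - P) u|| <= ||u||].  Norming
   functionals come from a finite-dimensional Hahn-Banach theorem; that the
   dual norm is an honest supremum, i.e. that every functional is bounded on
   the unit ball, follows from every norm dominating the coordinates, proved by
   induction on the number of coordinates with Hahn-Banach again.
   If [P B x = B x] and [||B x + B z|| <= ||B x||], the inequality at
   [B x + B z] gives [||(I - P) B z|| <= ||P B z||]; conversely, such a [z] lies
   in the tangent cone at the [x] with [B x = - P B z].  So [C_P = D_P], and
   [mu_k] and [sigma_k] are infima of the same set. *)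

HB.instance Definition _ := Monoid.isComLaw.Build R 0 Rplus
  (fun x y z => esym (Rplus_assoc x y z)) Rplus_comm Rplus_0_l.
HB.instance Definition _ := Monoid.isMulLaw.Build R 0 Rmult Rmult_0_l Rmult_0_r.
HB.instance Definition _ :=
  Monoid.isAddLaw.Build R Rmult Rplus Rmult_plus_distr_r Rmult_plus_distr_l.

Lemma sum_le m (a b : 'I_m -> R) : (forall k, a k <= b k) ->
  \big[Rplus/0]_(k < m) a k <= \big[Rplus/0]_(k < m) b k.
Proof.
move=> h; apply: (big_rec2 (fun x y => x <= y)) => [|k x y _ hxy]; first lra.
have := h k; lra.
Qed.

Lemma sum_ge0 m (a : 'I_m -> R) : (forall k, 0 <= a k) ->
  0 <= \big[Rplus/0]_(k < m) a k.
Proof.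
move=> h; apply: (big_rec (fun x => 0 <= x)) => [|k x _ hx]; first lra.
have := h k; lra.
Qed.

Lemma vec_ext m (x y : vec m) : (forall i, x i = y i) -> x = y.
Proof. exact: functional_extensionality. Qed.

Ltac vext := apply: vec_ext => i; rewrite /vadd /vscale /vzero.

Lemma ip_addr m (f x y : vec m) : ip f (vadd x y) = ip f x + ip f y.
Proof. rewrite /ip /vadd -big_split /=; apply: eq_bigr => i _; ring. Qed.

Lemma ip_addl m (f g x : vec m) : ip (vadd f g) x = ip f x + ip g x.
Proof. rewrite /ip /vadd -big_split /=; apply: eq_bigr => i _; ring. Qed.

Lemma ip_scaler m a (f x : vec m) : ip f (vscale a x) = a * ip f x.
Proof. rewrite /ip /vscale big_distrr /=; apply: eq_bigr => i _; ring. Qed.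

Lemma ip_scalel m a (f x : vec m) : ip (vscale a f) x = a * ip f x.
Proof. rewrite /ip /vscale big_distrr /=; apply: eq_bigr => i _; ring. Qed.

Lemma ipC m (f x : vec m) : ip f x = ip x f.
Proof. rewrite /ip; apply: eq_bigr => i _; ring. Qed.

Lemma ip0r m (f : vec m) : ip f (@vzero m) = 0.
Proof. rewrite /ip big1 // => i _; rewrite /vzero; ring. Qed.

Lemma ip0l m (x : vec m) : ip (@vzero m) x = 0.
Proof. by rewrite ipC ip0r. Qed.

Definition unitv m (k : 'I_m) : vec m := fun i => if i == k then 1 else 0.

Lemma ip_unitv m (f : vec m) (k : 'I_m) : ip f (unitv k) = f k.
Proof.
rewrite /ip (bigD1 k) //= big1 /unitv ?eqxx; first ring.
by move=> i /negbTE ->; ring.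
Qed.

Lemma vec_unitv_sum m (x : vec m) :
  x = \big[@vadd m/@vzero m]_(k < m) vscale (x k) (unitv k).
Proof.
apply: vec_ext => i.
rewrite (big_morph (fun v : vec m => v i) (id1 := 0) (op1 := Rplus)) //.
rewrite (bigD1 i) //= big1 /vscale /unitv ?eqxx; first ring.
by move=> j /negbTE; rewrite eq_sym => ->; ring.
Qed.

Lemma app_add m p (M : mat m p) x y : app M (vadd x y) = vadd (app M x) (app M y).
Proof. apply: vec_ext => i; exact: ip_addr. Qed.

Lemma app_scale m p (M : mat m p) a x : app M (vscale a x) = vscale a (app M x).
Proof. apply: vec_ext => i; exact: ip_scaler. Qed.

Lemma app_mmul m p q (M : mat m p) (N : mat p q) x :
  app (mmul M N) x = app M (app N x).
Proof.
apply: vec_ext => i; rewrite /app /mmul.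
under eq_bigr => j _ do rewrite big_distrl /=.
rewrite exchange_big /=; apply: eq_bigr => k _.
rewrite big_distrr /=; apply: eq_bigr => j _; ring.
Qed.

Lemma ip_app_adj m p (M : mat m p) f x : ip (app (adj M) f) x = ip f (app M x).
Proof.
rewrite /ip /app /adj.
under eq_bigr => j _ do rewrite big_distrl /=.
rewrite exchange_big /=; apply: eq_bigr => k _.
rewrite big_distrr /=; apply: eq_bigr => j _; ring.
Qed.

Lemma app_idmB m (P : mat m m) x :
  app (msub (@idm m) P) x = vadd x (vscale (-1) (app P x)).
Proof.
apply: vec_ext => i; rewrite /app /msub /vadd /vscale.
have -> : \big[Rplus/0]_(j < m) ((idm i j - P i j) * x j) =
    \big[Rplus/0]_(j < m) (idm i j * x j) +
    \big[Rplus/0]_(j < m) (-1 * (P i j * x j)).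
  by rewrite -big_split /=; apply: eq_bigr => j _; ring.
rewrite -big_distrr /=; congr (_ + _).
rewrite (bigD1 i) //= big1 /idm ?eqxx; first ring.
by move=> j /negbTE; rewrite eq_sym => ->; ring.
Qed.

Definition subspace m (D : vec m -> Prop) :=
  D (@vzero m) /\ (forall x y, D x -> D y -> D (vadd x y)) /\
  (forall a x, D x -> D (vscale a x)).

Definition linear_on m (D : vec m -> Prop) (F : vec m -> R) :=
  (forall x y, D x -> D y -> F (vadd x y) = F x + F y) /\
  (forall a x, D x -> F (vscale a x) = a * F x).

Lemma subspace_sum m (D : vec m -> Prop) (f : 'I_m -> vec m) :
  subspace D -> (forall k, D (f k)) -> D (\big[@vadd m/@vzero m]_(k < m) f k).
Proof. move=> [D0 [Dadd _]] Df; apply: (big_rec D) => // k v _ Dv; exact: Dadd. Qed.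

Lemma linear_on_sum m (D : vec m -> Prop) G (f : 'I_m -> vec m) :
  subspace D -> linear_on D G -> (forall k, D (f k)) ->
  G (\big[@vadd m/@vzero m]_(k < m) f k) = \big[Rplus/0]_(k < m) G (f k).
Proof.
move=> [D0 [Dadd _]] [Gadd Gscale] Df.
suff [] : D (\big[@vadd m/@vzero m]_(k < m) f k) /\
  G (\big[@vadd m/@vzero m]_(k < m) f k) = \big[Rplus/0]_(k < m) G (f k) by [].
apply: (big_rec2 (fun a b => D a /\ G a = b)) => [|k a b _ [Da <-]].
  split=> //; have -> : @vzero m = vscale 0 (@vzero m) by vext; ring.
  by rewrite Gscale //; ring.
by split; [exact: Dadd | rewrite Gadd].
Qed.

Lemma linear_on_ip m (D : vec m -> Prop) G :
  subspace D -> linear_on D G -> (forall k, D (unitv k)) ->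
  forall x, D x /\ G x = ip (fun k => G (unitv k)) x.
Proof.
move=> sD lG De x; have [_ [_ Dscale]] := sD; have [_ Gscale] := lG.
have De' k : D (vscale (x k) (unitv k)) by exact: Dscale.
rewrite (vec_unitv_sum x); split; first exact: subspace_sum.
rewrite (linear_on_sum sD lG De') /ip; apply: eq_bigr => k _.
rewrite Gscale // -(vec_unitv_sum x); ring.
Qed.

Section HahnBanach.

Variables (m : nat) (q : vec m -> R).
Hypothesis q_subadd : forall x y, q (vadd x y) <= q x + q y.
Hypothesis q_homog : forall a x, 0 <= a -> q (vscale a x) = a * q x.

Variables (D : vec m -> Prop) (F : vec m -> R).
Hypothesis D_subspace : subspace D.
Hypothesis F_linear : linear_on D F.
Hypothesis F_le_q : forall x, D x -> F x <= q x.

(* The admissible values of an extension at [y] lie between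
   [sup (F x - q (x - y))] and [inf (q (x + y) - F x)]. *)
Lemma extension_value_exists (y : vec m) : exists c,
  (forall x, D x -> F x - q (vadd x (vscale (-1) y)) <= c) /\
  (forall x, D x -> c <= q (vadd x y) - F x).
Proof.
have [D0 [Dadd _]] := D_subspace; have [Fadd _] := F_linear.
pose S r := exists x, D x /\ r = F x - q (vadd x (vscale (-1) y)).
have S_le x r : D x -> S r -> r <= q (vadd x y) - F x.
  move=> Dx [x' [Dx' ->]].
  have e : vadd x' x = vadd (vadd x' (vscale (-1) y)) (vadd x y) by vext; ring.
  have := q_subadd (vadd x' (vscale (-1) y)) (vadd x y); rewrite -e.
  have := F_le_q (Dadd _ _ Dx' Dx); rewrite Fadd //; lra.
have [c [c_ub c_lub]] : {c | is_lub S c}.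
  apply: completeness.
    by exists (q (vadd (@vzero m) y) - F (@vzero m)) => r; exact: S_le.
  by exists (F (@vzero m) - q (vadd (@vzero m) (vscale (-1) y))), (@vzero m).
exists c; split; first by move=> x Dx; apply: c_ub; exists x.
by move=> x Dx; apply: c_lub => r; exact: S_le.
Qed.

Lemma extension_le (y : vec m) c :
  (forall x, D x -> F x - q (vadd x (vscale (-1) y)) <= c) ->
  (forall x, D x -> c <= q (vadd x y) - F x) ->
  forall x t, D x -> F x + t * c <= q (vadd x (vscale t y)).
Proof.
have [_ [_ Dscale]] := D_subspace; have [_ Fscale] := F_linear.
move=> c_ge c_le x t Dx.
case: (Rtotal_order t 0) => [t_neg | [-> | t_pos]].
- have h := c_ge _ (Dscale (/ - t) _ Dx); rewrite Fscale // in h.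
  have -> : vadd x (vscale t y) =
            vscale (- t) (vadd (vscale (/ - t) x) (vscale (-1) y)).
    by vext; field; lra.
  rewrite q_homog; last lra.
  have := Rmult_le_compat_l (- t) _ _ (ltac:(lra) : 0 <= - t) h.
  have -> : - t * (/ - t * F x - q (vadd (vscale (/ - t) x) (vscale (-1) y))) =
    F x + t * q (vadd (vscale (/ - t) x) (vscale (-1) y)) by field; lra.
  lra.
- have -> : vadd x (vscale 0 y) = x by vext; ring.
  have := F_le_q Dx; lra.
- have h := c_le _ (Dscale (/ t) _ Dx); rewrite Fscale // in h.
  have -> : vadd x (vscale t y) = vscale t (vadd (vscale (/ t) x) y).
    by vext; field; lra.
  rewrite q_homog; last lra.
  have := Rmult_le_compat_l t _ _ (Rlt_le _ _ t_pos) h.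
  have -> : t * (q (vadd (vscale (/ t) x) y) - / t * F x) =
    t * q (vadd (vscale (/ t) x) y) - F x by field; lra.
  lra.
Qed.

Lemma span_coord_unique (y : vec m) x t x' t' : ~ D y -> D x -> D x' ->
  vadd x (vscale t y) = vadd x' (vscale t' y) -> x = x' /\ t = t'.
Proof.
have [_ [Dadd Dscale]] := D_subspace.
move=> Dy Dx Dx' E; have Ei i : x i + t * y i = x' i + t' * y i.
  by have := f_equal (fun v => v i) E.
case: (Req_dec t t') => [tt' | tt'].
  by split=> //; apply: vec_ext => i; have := Ei i; rewrite tt'; lra.
case: Dy; have -> : y = vscale (/ (t - t')) (vadd x' (vscale (-1) x)).
  vext; have -> : x' i + -1 * x i = (t - t') * y i by have := Ei i; lra.
  by field; lra.
exact/Dscale/Dadd/Dscale.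
Qed.

Lemma hahn_banach_step (y : vec m) :
  exists D' F', subspace D' /\ linear_on D' F' /\ (forall x, D' x -> F' x <= q x) /\
    D' y /\ (forall x, D x -> D' x /\ F' x = F x).
Proof.
have [D0 [Dadd Dscale]] := D_subspace; have [Fadd Fscale] := F_linear.
case: (classic (D y)) => Dy; first by exists D, F.
have [c [c_ge c_le]] := extension_value_exists y.
pose D' z := exists x t, D x /\ z = vadd x (vscale t y).
pose F' z := epsilon (inhabits 0)
  (fun r => exists x t, D x /\ z = vadd x (vscale t y) /\ r = F x + t * c).
have F'E x t : D x -> F' (vadd x (vscale t y)) = F x + t * c.
  move=> Dx; rewrite /F'; have [|x' [t' [Dx' [E ->]]]] := epsilon_spec (inhabits 0)
    (fun r => exists x' t', D x' /\ vadd x (vscale t y) = vadd x' (vscale t' y) /\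
                           r = F x' + t' * c).
    by exists (F x + t * c), x, t.
  by have [-> ->] := span_coord_unique Dy Dx Dx' E.
exists D', F'; split; [|split; [|split; [|split]]].
- split; [|split].
  + by exists (@vzero m), 0; split=> //; vext; ring.
  + move=> _ _ [x1 [t1 [D1 ->]]] [x2 [t2 [D2 ->]]].
    by exists (vadd x1 x2), (t1 + t2); split; [exact: Dadd | vext; ring].
  + move=> a _ [x1 [t1 [D1 ->]]].
    by exists (vscale a x1), (a * t1); split; [exact: Dscale | vext; ring].
- split.
  + move=> _ _ [x1 [t1 [D1 ->]]] [x2 [t2 [D2 ->]]].
    have -> : vadd (vadd x1 (vscale t1 y)) (vadd x2 (vscale t2 y)) =
              vadd (vadd x1 x2) (vscale (t1 + t2) y) by vext; ring.
    by rewrite !F'E ?Fadd //; [ring | exact: Dadd].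
  + move=> a _ [x1 [t1 [D1 ->]]].
    have -> : vscale a (vadd x1 (vscale t1 y)) =
              vadd (vscale a x1) (vscale (a * t1) y) by vext; ring.
    by rewrite !F'E ?Fscale //; [ring | exact: Dscale].
- by move=> _ [x [t [Dx ->]]]; rewrite F'E //; exact: extension_le.
- by exists (@vzero m), 1; split=> //; vext; ring.
- move=> x Dx; have E : x = vadd x (vscale 0 y) by vext; ring.
  by split; [exists x, 0 | rewrite {1}E F'E //; ring].
Qed.

End HahnBanach.

Lemma hahn_banach_unitv_prefix m (q : vec m -> R) D F :
  (forall x y, q (vadd x y) <= q x + q y) ->
  (forall a x, 0 <= a -> q (vscale a x) = a * q x) ->
  subspace D -> linear_on D F -> (forall x, D x -> F x <= q x) ->
  forall j, (j <= m)%N ->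
  exists D' G, subspace D' /\ linear_on D' G /\ (forall x, D' x -> G x <= q x) /\
    (forall k : 'I_m, (k < j)%N -> D' (unitv k)) /\
    (forall x, D x -> D' x /\ G x = F x).
Proof.
move=> q_subadd q_homog sD lF Fq; elim=> [_ | j IH jm]; first by exists D, F.
have [D1 [G1 [sD1 [lG1 [G1q [De1 ext1]]]]]] := IH (ltnW jm).
have [D2 [G2 [sD2 [lG2 [G2q [Dj ext2]]]]]] :=
  hahn_banach_step q_subadd q_homog sD1 lG1 G1q (unitv (Ordinal jm)).
exists D2, G2; do 3 (split=> //); split.
  move=> k; rewrite ltnS leq_eqVlt => /orP [/eqP kj | kj].
    by have -> : k = Ordinal jm by apply: val_inj.
  by have [] := ext2 _ (De1 _ kj).
by move=> x Dx; have [D1x <-] := ext1 _ Dx; exact: ext2.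
Qed.

Lemma hahn_banach m (q : vec m -> R) D F :
  (forall x y, q (vadd x y) <= q x + q y) ->
  (forall a x, 0 <= a -> q (vscale a x) = a * q x) ->
  subspace D -> linear_on D F -> (forall x, D x -> F x <= q x) ->
  exists f : vec m, (forall x, ip f x <= q x) /\ (forall x, D x -> ip f x = F x).
Proof.
move=> q_subadd q_homog sD lF Fq.
have [D' [G [sD' [lG [Gq [De ext]]]]]] :=
  hahn_banach_unitv_prefix q_subadd q_homog sD lF Fq (leqnn m).
have De' k : D' (unitv k) by apply: De.
exists (fun k => G (unitv k)); split.
  by move=> x; have [Dx <-] := linear_on_ip sD' lG De' x; exact: Gq.
move=> x Dx; have [D'x <-] := ext _ Dx.
by have [_ <-] := linear_on_ip sD' lG De' x.
Qed.

Section Norms.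

Variables (m : nat) (p : vec m -> R).
Hypothesis p_norm : is_norm p.

Lemma norm_ge0 x : 0 <= p x.
Proof. by case: p_norm. Qed.

Lemma normD x y : p (vadd x y) <= p x + p y.
Proof. by case: p_norm => _ [_ [_ ?]]. Qed.

Lemma normZ a x : p (vscale a x) = Rabs a * p x.
Proof. by case: p_norm => _ [_ [? _]]. Qed.

Lemma normZ_ge0 a x : 0 <= a -> p (vscale a x) = a * p x.
Proof. by move=> a0; rewrite normZ Rabs_pos_eq. Qed.

Lemma normN x : p (vscale (-1) x) = p x.
Proof. by rewrite normZ Rabs_Ropp Rabs_R1 Rmult_1_l. Qed.

Lemma norm0 : p (@vzero m) = 0.
Proof.
have -> : @vzero m = vscale 0 (@vzero m) by vext; ring.
by rewrite normZ Rabs_R0 Rmult_0_l.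
Qed.

Lemma norm_gt0 x : x <> @vzero m -> 0 < p x.
Proof.
case: p_norm => _ [p_eq0 _] nx; case: (norm_ge0 x) => // h.
by case: nx; exact: p_eq0.
Qed.

Lemma norm_le_coord_sum x : p x <= \big[Rplus/0]_(k < m) (Rabs (x k) * p (unitv k)).
Proof.
rewrite {1}(vec_unitv_sum x).
apply: (big_rec2 (fun a b => p a <= b)) => [|k a b _ h]; first by rewrite norm0; lra.
by apply: Rle_trans (normD _ _) _; rewrite normZ; lra.
Qed.

Lemma norming_functional u : exists f, (forall x, ip f x <= p x) /\ ip f u = p u.
Proof.
case: (classic (u = @vzero m)) => [-> | u_nz].
  by exists (@vzero m); split=> [x|]; rewrite ip0l ?norm0 //; exact: norm_ge0.
have [k uk] : exists k, u k <> 0.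
  apply: NNPP => h; apply: u_nz; apply: vec_ext => k.
  by apply: NNPP => h2; apply: h; exists k.
pose w := vscale (p u / u k) (unitv k).
have wu : ip w u = p u by rewrite /w ip_scalel ipC ip_unitv; field.
pose D z := exists a, z = vscale a u.
have sD : subspace D.
  split; [|split].
  - by exists 0; vext; ring.
  - by move=> _ _ [a ->] [b ->]; exists (a + b); vext; ring.
  - by move=> c _ [a ->]; exists (c * a); vext; ring.
have lw : linear_on D (ip w).
  by split=> [x y _ _ | a x _]; [exact: ip_addr | exact: ip_scaler].
have w_le : forall x, D x -> ip w x <= p x.
  move=> _ [a ->]; rewrite ip_scaler wu normZ.
  by have := norm_ge0 u; have := Rle_abs a; nra.
have [f [f_le fw]] := hahn_banach normD normZ_ge0 sD lw w_le.
by exists f; split=> //; rewrite fw ?wu //; exists 1; vext; ring.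
Qed.

End Norms.

Definition supported_below m d (x : vec m) := forall i : 'I_m, (d <= i)%N -> x i = 0.

Lemma supported_below_subspace m d : subspace (@supported_below m d).
Proof.
split; [|split]; first by [].
- by move=> x y hx hy i di; rewrite /vadd hx ?hy //; ring.
- by move=> a x hx i di; rewrite /vscale hx //; ring.
Qed.

Lemma supported_below_drop_last m d (dm : (d < m)%N) (x : vec m) :
  supported_below d.+1 x ->
  supported_below d (vadd x (vscale (- x (Ordinal dm)) (unitv (Ordinal dm)))) /\
  forall i : 'I_m, (i < d)%N ->
    vadd x (vscale (- x (Ordinal dm)) (unitv (Ordinal dm))) i = x i.
Proof.
have ne i : (i != Ordinal dm) = (i != d :> nat) by [].
move=> hx; split=> i di; rewrite /vadd /vscale /unitv.
  case: eqP => [-> | /eqP]; first ring.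
  by rewrite ne => i_ne_d; rewrite hx ?Rmult_0_r ?Rplus_0_l // ltn_neqAle eq_sym i_ne_d.
by case: eqP => [ei|_]; [move: di; rewrite ei ltnn | ring].
Qed.

Section CoordinateBound.

Variables (m : nat) (p : vec m -> R).
Hypothesis p_norm : is_norm p.

Definition coord_bounded d C :=
  forall x, supported_below d x -> forall i, Rabs (x i) <= C * p x.

Lemma coord_functional_extension d C : 0 <= C -> coord_bounded d C ->
  forall i, exists g : vec m,
    (forall x, Rabs (ip g x) <= C * p x) /\
    (forall x, supported_below d x -> ip g x = x i).
Proof.
move=> C0 bC i.
have lF : linear_on (supported_below d) (fun x => x i) by [].
have F_le x : supported_below d x -> x i <= C * p x.
  by move=> hx; have := bC x hx i; have := Rle_abs (x i); lra.
have Cp_subadd x y : C * p (vadd x y) <= C * p x + C * p y.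
  by have := normD p_norm x y; nra.
have Cp_homog a x : 0 <= a -> C * p (vscale a x) = a * (C * p x).
  by move=> a0; rewrite normZ_ge0 //; ring.
have [g [g_le gF]] :=
  hahn_banach Cp_subadd Cp_homog (supported_below_subspace m d) lF F_le.
exists g; split=> // x; apply: Rabs_le.
by have := g_le (vscale (-1) x); rewrite ip_scaler normN //; have := g_le x; lra.
Qed.

(* With [G i] extending the coordinates from the vectors supported below [d],
   [x - (G i x)_(i<d)] is [x d] times a fixed nonzero vector [u], and its norm
   is at most [||x||] plus a multiple of [||x||]. *)
Lemma last_coord_bounded d (dm : (d < m)%N) C (G : 'I_m -> vec m) : 0 <= C ->
  (forall i x, Rabs (ip (G i) x) <= C * p x) ->
  (forall i x, supported_below d x -> ip (G i) x = x i) ->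
  exists K, 0 <= K /\
    forall x, supported_below d.+1 x -> Rabs (x (Ordinal dm)) <= K * p x.
Proof.
move=> C0 G_le G_ext; set dd := Ordinal dm.
pose u : vec m := fun k => if (k < d)%N then - ip (G k) (unitv dd)
                           else if k == dd then 1 else 0.
have pu : 0 < p u.
  apply: (norm_gt0 p_norm) => h; have := f_equal (fun v => v dd) h.
  rewrite /u /vzero /= ltnn eqxx; lra.
pose S := \big[Rplus/0]_(k < m) p (unitv k).
have S0 : 0 <= S by apply: sum_ge0 => k; exact: norm_ge0.
exists ((1 + C * S) / p u); split; first by apply: Rle_mult_inv_pos => //; nra.
move=> x hx; set t := x dd.
have [v_supp v_eq] := supported_below_drop_last dm hx.
set v := vadd x _ in v_supp v_eq.
pose pi : vec m := fun k => if (k < d)%N then ip (G k) x else 0.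
have x_sub_pi : vadd x (vscale (-1) pi) = vscale t u.
  have x_split : x = vadd v (vscale t (unitv dd)).
    by apply: vec_ext => j; rewrite /v /t /dd /vadd /vscale; ring.
  vext; rewrite /pi /u; case: ltnP => ki.
    rewrite [in ip (G i) x]x_split ip_addr ip_scaler G_ext // v_eq //; ring.
  case: eqP => [-> | ne]; first by rewrite /t; ring.
  rewrite hx; first ring.
  by rewrite ltn_neqAle ki andbT; apply/eqP => e; apply: ne; exact: val_inj.
have p_pi : p pi <= C * p x * S.
  apply: Rle_trans (norm_le_coord_sum p_norm pi) _.
  rewrite /S big_distrr /=; apply: sum_le => k.
  apply: Rmult_le_compat_r; first exact: norm_ge0.
  rewrite /pi; case: ltnP => _ //; rewrite Rabs_R0.
  by have := norm_ge0 p_norm x; nra.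
have t_le : Rabs t * p u <= (1 + C * S) * p x.
  have := normD p_norm x (vscale (-1) pi).
  by rewrite normN // x_sub_pi normZ //; lra.
apply: (Rmult_le_reg_r (p u)) => //.
by have -> : (1 + C * S) / p u * p x * p u = (1 + C * S) * p x by field; lra.
Qed.

Lemma coord_bounded_step d C : 0 <= C -> coord_bounded d C ->
  exists C', 0 <= C' /\ coord_bounded d.+1 C'.
Proof.
move=> C0 bC; case: (ltnP d m) => dm; last first.
  exists C; split=> // x hx; apply: bC => j dj.
  by have := ltn_ord j; rewrite ltnNge (leq_trans dm dj).
set dd := Ordinal dm.
have exG := coord_functional_extension C0 bC.
pose G i := proj1_sig (constructive_indefinite_description _ (exG i)).
have [G_le G_ext] : (forall i x, Rabs (ip (G i) x) <= C * p x) /\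
                    (forall i x, supported_below d x -> ip (G i) x = x i).
  by split=> i; case: (proj2_sig (constructive_indefinite_description _ (exG i))).
have [K [K0 K_le]] := last_coord_bounded dm C0 G_le G_ext.
have pe0 := norm_ge0 p_norm (unitv dd).
have C'0 : 0 <= K + C * (1 + K * p (unitv dd)).
  by have := Rmult_le_pos _ _ C0 (Rmult_le_pos _ _ K0 pe0); lra.
exists (K + C * (1 + K * p (unitv dd))); split=> //.
move=> x hx i; have px0 := norm_ge0 p_norm x; have tK := K_le x hx; rewrite -/dd in tK.
have [v_supp v_eq] := supported_below_drop_last dm hx.
set v := vadd x _ in v_supp v_eq.
case: (ltnP i d) => [i_lt_d | d_le_i].
  rewrite -v_eq //; have v_le := bC v v_supp i.
  have pv : p v <= (1 + K * p (unitv dd)) * p x.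
    apply: Rle_trans (normD p_norm _ _) _; rewrite normZ // Rabs_Ropp -/dd.
    by have := Rmult_le_compat_r _ _ _ pe0 tK; lra.
  have := Rmult_le_compat_l _ _ _ C0 pv; have := Rmult_le_pos _ _ K0 px0; lra.
case: (eqVneq i dd) => [-> | ne].
  by have := Rmult_le_pos _ _ (Rmult_le_pos _ _ C0 (Rmult_le_pos _ _ K0 pe0)) px0; nra.
rewrite hx ?Rabs_R0; first exact: Rmult_le_pos.
rewrite ltn_neqAle d_le_i andbT; apply/eqP => e.
by move: ne; rewrite (_ : i = dd) ?eqxx //; exact: val_inj.
Qed.

Lemma coord_le_norm : exists C, 0 <= C /\ forall (x : vec m) i, Rabs (x i) <= C * p x.
Proof.
suff [C [C0 bC]] : exists C, 0 <= C /\ coord_bounded m C.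
  by exists C; split=> // x i; apply: bC => j mj; have := ltn_ord j; rewrite ltnNge mj.
elim: m => [|d [C [C0 bC]]]; last exact: coord_bounded_step C0 bC.
by exists 0; split=> [|x hx i]; [lra | rewrite hx // Rabs_R0; lra].
Qed.

End CoordinateBound.

Section DualNorm.

Variables (m : nat) (p : vec m -> R).
Hypothesis p_norm : is_norm p.

Lemma dual_norm_is_lub h :
  is_lub (fun t => exists e, p e <= 1 /\ t = ip h e) (dual_norm p h).
Proof.
have [C [C0 C_le]] := coord_le_norm p_norm.
have S_bound : bound (fun t => exists e, p e <= 1 /\ t = ip h e).
  exists (\big[Rplus/0]_(k < m) (Rabs (h k) * C)) => _ [e [pe ->]].
  rewrite /ip; apply: sum_le => k.
  apply: Rle_trans (Rle_abs _) _; rewrite Rabs_mult.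
  apply: Rmult_le_compat_l; first exact: Rabs_pos.
  by have := C_le e k; nra.
have S_inhabited : exists t, exists e, p e <= 1 /\ t = ip h e.
  by exists 0, (@vzero m); rewrite norm0 ?ip0r //; split=> //; lra.
have [s s_lub] := completeness _ S_bound S_inhabited.
by apply: (epsilon_spec (inhabits 0)); exists s.
Qed.

Lemma dual_norm_le1 h : (forall e, ip h e <= p e) -> dual_norm p h <= 1.
Proof.
move=> h_le; apply: (proj2 (dual_norm_is_lub h)) => _ [e [pe ->]].
by have := h_le e; lra.
Qed.

Lemma ip_le_dual_norm h e : ip h e <= dual_norm p h * p e.
Proof.
case: (classic (e = @vzero m)) => [-> | e_nz].
  by rewrite ip0r norm0 // Rmult_0_r; lra.
have pe := norm_gt0 p_norm e_nz.
have : ip h (vscale (/ p e) e) <= dual_norm p h.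
  apply: (proj1 (dual_norm_is_lub h)); exists (vscale (/ p e) e); split=> //.
  have inv_ge0 : 0 <= / p e by apply/Rlt_le/Rinv_0_lt_compat.
  by rewrite normZ_ge0 // Rinv_l; lra.
rewrite ip_scaler => h_le.
apply: (Rmult_le_reg_r (/ p e)); first exact: Rinv_0_lt_compat.
by rewrite Rmult_assoc Rinv_r ?Rmult_1_r; lra.
Qed.

Lemma norm_proj_add_le (P : mat m m) :
  (forall f g, dual_norm p (vadd (app (adj P) f) (app (adj (msub (@idm m) P)) g))
                 <= Rmax (dual_norm p f) (dual_norm p g)) ->
  forall u, p (app P u) + p (app (msub (@idm m) P) u) <= p u.
Proof.
move=> P_dual u.
have [f [f_le fu]] := norming_functional p_norm (app P u).
have [g [g_le gu]] := norming_functional p_norm (app (msub (@idm m) P) u).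
have h_le1 : dual_norm p (vadd (app (adj P) f) (app (adj (msub (@idm m) P)) g)) <= 1.
  apply: Rle_trans (P_dual f g) _.
  by apply: Rmax_lub; apply: dual_norm_le1.
have := ip_le_dual_norm (vadd (app (adj P) f) (app (adj (msub (@idm m) P)) g)) u.
rewrite ip_addl !ip_app_adj fu gu.
by have := norm_ge0 p_norm u; nra.
Qed.

End DualNorm.

Section Cones.

Variables (m p : nat) (nrm : vec m -> R) (B : mat m p) (P : mat m m).
Hypothesis nrm_norm : is_norm nrm.

Lemma CP_DP :
  (forall u, nrm (app P u) + nrm (app (msub (@idm m) P) u) <= nrm u) ->
  forall z, CP nrm B P z -> DP nrm B P (msub (@idm m) P) z.
Proof.
move=> P_add_le _ [x [Px [l [z [l0 [z_le ->]]]]]].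
rewrite /DP !app_scale !normZ_ge0 //; apply: Rmult_le_compat_l => //.
set E := app B x in Px z_le *; set W := app B z in z_le *.
have := P_add_le (vadd E W).
have PEW : app P (vadd E W) = vadd E (app P W) by rewrite app_add Px.
have -> : app (msub (@idm m) P) (vadd E W) = app (msub (@idm m) P) W.
  by rewrite !app_idmB PEW; vext; ring.
have : nrm E <= nrm (vadd E (app P W)) + nrm (app P W).
  have := normD nrm_norm (vadd E (app P W)) (vscale (-1) (app P W)).
  rewrite normN //.
  by have -> : vadd (vadd E (app P W)) (vscale (-1) (app P W)) = E by vext; ring.
rewrite PEW; lra.
Qed.

Lemma DP_CP : mmul P P = P -> (forall e, exists x, app B x = e) ->
  forall z, DP nrm B P (msub (@idm m) P) z -> CP nrm B P z.
Proof.
move=> PP B_onto z z_DP.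
have [x Bx] := B_onto (vscale (-1) (app P (app B z))).
exists x; split; first by rewrite Bx app_scale -app_mmul PP.
exists 1, z; split; first lra; split; last by vext; ring.
rewrite Bx normN //.
by have -> : vadd (vscale (-1) (app P (app B z))) (app B z) =
             app (msub (@idm m) P) (app B z) by rewrite app_idmB; vext; ring.
Qed.

End Cones.

Theorem lemma7 (n m p : nat) (nrm : vec m -> R) (fam : mat m m -> Prop)
  (nu : mat m m -> R) (Pbar : mat m m -> mat m m) (B : mat m p) (A : mat n p) :
  sparsity_structure nrm fam nu Pbar ->
  (forall x y, app B x = app B y -> x = y) ->
  (forall e, exists x, app B x = e) ->
  (forall P, fam P -> Pbar P = msub (@idm m) P) ->
  (forall P, fam P -> forall z, CP nrm B P z <-> DP nrm B P (Pbar P) z) /\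
  (forall k, 0 <= k -> mu_k nrm fam nu B A k = sigma_k nrm fam nu Pbar B A k).
Proof.
move=> [nrm_norm fam_spec] _ B_onto Pbar_def.
have CP_iff_DP P : fam P -> forall z, CP nrm B P z <-> DP nrm B P (Pbar P) z.
  move=> famP z; have [PP [_ [_ P_dual]]] := fam_spec P famP.
  rewrite Pbar_def // in P_dual *.
  split; first exact/CP_DP/(norm_proj_add_le nrm_norm).
  exact: DP_CP.
split=> // k _; rewrite /mu_k /sigma_k; congr Inf.
apply: functional_extensionality => r; apply: propositional_extensionality; split.
- move=> [P [x [z [famP [nuP [Px [z_T [z_nz ->]]]]]]]].
  by exists P, z; do 3 split=> //; split=> //; apply/CP_iff_DP => //; exists x.
- move=> [P [z [famP [nuP [z_nz [z_DP ->]]]]]].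
  by have [x [Px z_T]] := proj2 (CP_iff_DP P famP z) z_DP; exists P, x, z.
Qed.
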